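(* For any number of buyers $I\ge1$, any $k\ge 1$, $a>0$ and $X>0$, the exponential price mechanism with parameters $(k,a,X)$ guarantees a revenue of $$\sum_{v\in V}p(v)\cdot\min_{0\le n\le I}\left(\frac{a\,v}{k}\sum_{j=n+1}^{I}\frac1j+nX\big((1+1/a)^k-1\big)-(I-n)X\right).$$ Consequently it (for suitable parameters) guarantees any revenue below $\Pi_I^*$, the supremum of this expression over $k\ge1$, $a>0$, $X$.
   Context: Setting: a single good is sold to buyers $\mathcal I=\{1,\ldots,I\}$ who have a common value $v\in V=\{0,\nu,2\nu,\ldots,1\}$ with known prior $p\in\Delta(V)$, and quasi-linear utility. A mechanism consists of finite message sets $M_i$ (with $M=\prod_i M_i$), allocation rules $q_i:M\to[0,1]$ with $\sum_i q_i(m)\le 1$, and payment rules $P_i:M\to\mathbb R$; each $M_i$ contains an opt-out message $0$ with $q_i(0,m_{-i})=P_i(0,m_{-i})=0$ for all $m_{-i}$. Buyer $i$'s utility is $U_i(v,m)=v\,q_i(m)-P_i(m)$. A Bayes correlated equilibrium (BCE) of the mechanism is a $\mu\in\Delta(V\times M)$ with $\sum_m\mu(v,m)=p(v)$ for all $v$ and $\sum_{(v,m_{-i})}\mu(v,m)\big(U_i(v,(m_i,m_{-i}))-U_i(v,(m_i',m_{-i}))\big)\ge 0$ for all $i$ and all $m_i,m_i'\in M_i$. A mechanism guarantees revenue $R$ if every BCE $\mu$ satisfies $\sum_{(v,m)}\sum_i\mu(v,m)P_i(m)\ge R$. Exponential price mechanism (parameters $k\ge1$, $a>0$, $X>0$):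 $M_i=\{0,1,\ldots,k\}$ for all $i$; it is symmetric, i.e. $q_i(m)=q(m_i,m_{-i})$ and $P_i(m)=P(m_i,m_{-i})$ where $q,P$ are invariant under permutations of the entries of $m_{-i}$. The allocation is defined by $q(0,m_{-1})=0$ and, for $0\le m_1\le k-1$, $q(m_1+1,m_{-1})-q(m_1,m_{-1})=\frac1k\cdot\frac{1}{|\mathrm{rank}(m_1,m_{-1})|}\sum_{j\in\mathrm{rank}(m_1,m_{-1})}\frac1j$, where $\mathrm{rank}(m_1,m_{-1})\subseteq\{1,\ldots,I\}$ is the set of positions (counting from the top, ties occupying consecutive positions) that the value $m_1$ occupies in the list $(m_1,\ldots,m_I)$ sorted in decreasing order (e.g. $\mathrm{rank}(20,10,20,40,30)=\{3,4\}$). The payment is $P(m_1,m_{-1})=X\big((1+1/a)^{m_1}-1\big)$. *)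

From HB Require Import structures.
From mathcomp Require Import all_boot all_order all_algebra.
Set Implicit Arguments. Unset Strict Implicit. Unset Printing Implicit Defensive.
Import Order.TTheory GRing.Theory Num.Theory.
Local Open Scope ring_scope.

Definition profile (I k : nat) := {ffun 'I_I -> 'I_k.+1}.

(* Value grid V = {0, nu, 2nu, ..., 1} with nu = 1/N; index t stands for t/N. *)
Definition vgrid (R : realFieldType) (N : nat) (t : 'I_N.+1) : R := t%:R / N%:R.

Definition is_prior (R : realFieldType) (N : nat) (p : 'I_N.+1 -> R) : Prop :=
  (forall t, 0 <= p t) /\ \sum_t p t = 1.

Definition upd (I k : nat) (m : profile I k) (i : 'I_I) (x : 'I_k.+1) : profile I k :=
  [ffun j => if j == i then x else m j].

Definition util (R : realFieldType) (N I k : nat)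
  (q P : 'I_I -> profile I k -> R) (i : 'I_I) (t : 'I_N.+1) (m : profile I k) : R :=
  vgrid R t * q i m - P i m.

Definition is_BCE (R : realFieldType) (N I k : nat) (p : 'I_N.+1 -> R)
  (q P : 'I_I -> profile I k -> R) (mu : 'I_N.+1 -> profile I k -> R) : Prop :=
  [/\ (forall t m, 0 <= mu t m),
      (forall t, \sum_(m : profile I k) mu t m = p t) &
      (forall (i : 'I_I) (x y : 'I_k.+1),
          0 <= \sum_t \sum_(m : profile I k | m i == x)
                 mu t m * (util q P i t m - util q P i t (upd m i y)))].

Definition guarantees (R : realFieldType) (N I k : nat) (p : 'I_N.+1 -> R)
  (q P : 'I_I -> profile I k -> R) (Rv : R) : Prop :=
  forall mu, is_BCE p q P mu ->
    Rv <= \sum_t \sum_(m : profile I k) mu t m * \sum_i P i m.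

(* rank(m_i, m_{-i}): positions (1-based, from the top) occupied by the value
   m_i in the list of all messages sorted in decreasing order. *)
Definition rank_pos (I k : nat) (m : profile I k) (i : 'I_I) : seq nat :=
  let s := sort (fun x y : nat => (y <= x)%N) [seq val (m j) | j <- enum 'I_I] in
  [seq j <- iota 1 I | nth 0%N s j.-1 == val (m i)].

(* Exponential price mechanism allocation:
   q_i(m) = sum_{t < m_i} (q(t+1, m_{-i}) - q(t, m_{-i})), with q(0, .) = 0. *)
Definition exp_q (R : realFieldType) (I k : nat) (i : 'I_I) (m : profile I k) : R :=
  \sum_(t < k.+1 | (t < m i)%N)
     ((k%:R)^-1 * ((size (rank_pos (upd m i t) i))%:R^-1 *
                   \sum_(j <- rank_pos (upd m i t) i) (j%:R)^-1)).

Definition exp_P (R : realFieldType) (I k : nat) (a X : R) (i : 'I_I) (m : profile I k) : R :=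
  X * ((1 + a^-1) ^+ (m i) - 1).

Definition bound_term (R : realFieldType) (I k : nat) (a X v : R) (n : nat) : R :=
  a * v / k%:R * (\sum_(n.+1 <= j < I.+1) (j%:R)^-1)
  + n%:R * (X * ((1 + a^-1) ^+ k - 1)) - (I - n)%:R * X.

Definition rev_bound (R : realFieldType) (N I k : nat) (a X : R) (p : 'I_N.+1 -> R) : R :=
  \sum_t p t * \big[Order.min/bound_term I k a X (vgrid R t) 0%N]_(n < I.+1)
                  bound_term I k a X (vgrid R t) n.

From HB Require Import structures.
From mathcomp Require Import all_boot all_order all_algebra.
From mathcomp Require Import ring.
Set Implicit Arguments. Unset Strict Implicit. Unset Printing Implicit Defensive.
Import Order.TTheory GRing.Theory Num.Theory.
Local Open Scope ring_scope.

(* Let n(m) be the number of buyers sending the top message k.  For a buyer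
   with m_i < k, the obedience constraint against deviating to m_i + 1 says
   that in expectation the extra price (P_i + X)/a outweighs v times the extra
   allocation, which is k^-1 times the average of 1/j over the ranks occupied
   by m_i.  Summed over all buyers below the top, these averages add up to the
   harmonic tail 1/(n(m)+1) + ... + 1/I, so the total payment is the bound term
   at n(m) plus a times a sum of obedience slacks with nonnegative expectation;
   bounding the bound term by its minimum over n gives the guarantee. *)

Lemma guarantees_le (R : realFieldType) (N I k : nat) (p : 'I_N.+1 -> R)
    (q P : 'I_I -> profile I k -> R) (Rv Rv' : R) :
  Rv' <= Rv -> guarantees p q P Rv -> guarantees p q P Rv'.
Proof. by move=> le_Rv guar mu /guar; exact: le_trans. Qed.

Lemma sorted_geq_split_max (k : nat) (s : seq nat) :
  sorted (fun x y : nat => (y <= x)%N) s -> all (fun x => x <= k)%N s ->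
  exists2 s', s = nseq (count_mem k s) k ++ s' & all (fun x => x < k)%N s'.
Proof.
elim: s => [|x s IHs] /=; first by exists [::].
move=> sorted_xs /andP[le_xk le_sk].
have [-> | ne_xk] := eqVneq x k.
  have [s' def_s lt_s'k] := IHs (path_sorted sorted_xs) le_sk.
  by exists s'; rewrite //= {1}def_s.
have lt_xk : (x < k)%N by rewrite ltn_neqAle ne_xk.
have le_sx : all (fun y => y <= x)%N s.
  by apply: order_path_min sorted_xs => y z w /= le_zy le_wz; exact: leq_trans le_wz le_zy.
have lt_sk : all (fun y => y < k)%N s.
  by apply: sub_all le_sx => y /= le_yx; exact: leq_ltn_trans le_yx lt_xk.
exists (x :: s); last by rewrite /= lt_xk.
suff -> : count_mem k s = 0%N by [].
by apply/count_memPn/negP => /(allP lt_sk); rewrite ltnn.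
Qed.

Definition rank_share (R : realFieldType) (I k : nat) (m : profile I k) (i : 'I_I) : R :=
  (size (rank_pos m i))%:R^-1 * \sum_(j <- rank_pos m i) (j%:R)^-1.

Section RankShares.

Variables (R : realFieldType) (I k : nat) (m : profile I k).

Definition desc_msgs : seq nat :=
  sort (fun x y : nat => (y <= x)%N) [seq val (m j) | j <- enum 'I_I].

Definition top_count : nat := #|[pred i | val (m i) == k]|.

Lemma size_desc_msgs : size desc_msgs = I.
Proof. by rewrite size_sort size_map size_enum_ord. Qed.

Lemma count_desc_msgs w : count_mem w desc_msgs = #|[pred i | val (m i) == w]|.
Proof.
rewrite (permP (permEl (perm_sort _ _))) count_map cardE size_filter enumT.
by apply: eq_count => i; rewrite /= eq_sym.
Qed.

Lemma count_positions w :
  count (fun j => nth 0%N desc_msgs j.-1 == w) (iota 1 I) = #|[pred i | val (m i) == w]|.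
Proof.
rewrite -count_desc_msgs -[in RHS](mkseq_nth 0%N desc_msgs) size_desc_msgs.
by rewrite /mkseq count_map (iotaDl 1 0) count_map.
Qed.

Lemma nth_desc_msgs_lt j :
  (j < I)%N -> (nth 0%N desc_msgs j < k)%N = (top_count <= j)%N.
Proof.
move=> lt_jI.
have sorted_s : sorted (fun x y : nat => (y <= x)%N) desc_msgs.
  by apply: sort_sorted => x y; exact: leq_total.
have le_sk : all (fun x => x <= k)%N desc_msgs.
  by apply/allP => x; rewrite mem_sort => /mapP[i _ ->] /=; rewrite -ltnS.
have [s' def_s lt_s'k] := sorted_geq_split_max sorted_s le_sk.
rewrite count_desc_msgs -/top_count in def_s.
have size_s' : size s' = (I - top_count)%N.
  by rewrite -size_desc_msgs def_s size_cat size_nseq addKn.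
rewrite def_s nth_cat size_nseq.
case: (ltnP j top_count) => [lt_jn | le_nj]; first by rewrite nth_nseq lt_jn ltnn.
apply: (allP lt_s'k); apply: mem_nth.
by rewrite size_s' ltn_sub2r // (leq_ltn_trans le_nj).
Qed.

Lemma sum_rank_share_positions :
  \sum_(i | (m i < k)%N) rank_share R m i
  = \sum_(j <- iota 1 I | (nth 0%N desc_msgs j.-1 < k)%N) (j%:R)^-1.
Proof.
pose c w : R := #|[pred i | val (m i) == w]|%:R.
transitivity (\sum_(i | (m i < k)%N) \sum_(j <- iota 1 I | nth 0%N desc_msgs j.-1 == m i)
                (c (nth 0%N desc_msgs j.-1))^-1 * (j%:R)^-1).
  apply: eq_bigr => i _.
  rewrite /rank_share size_filter count_positions big_filter mulr_sumr.
  by apply: eq_bigr => j /eqP ->.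
rewrite (exchange_big_dep xpredT) //= [RHS]big_mkcond; apply: eq_big_seq => j j_in.
set w := nth 0%N desc_msgs j.-1.
have c_pos : (0 < #|[pred i | val (m i) == w]|)%N.
  by rewrite -count_positions -has_count; apply/hasP; exists j.
have [lt_wk | le_kw] := ltnP w k; last first.
  by rewrite big1 // => i /andP[lt_mk /eqP def_w]; move: le_kw; rewrite def_w leqNgt lt_mk.
rewrite (eq_bigl [pred i | val (m i) == w]) => [|i]; last first.
  by rewrite /= eq_sym andb_idl // => /eqP ->.
have c_neq0 : c w != 0 by rewrite pnatr_eq0 -lt0n.
by rewrite sumr_const -[_ *+ _]mulr_natr mulrAC mulVf ?mul1r.
Qed.

Lemma top_count_le : (top_count <= I)%N.
Proof. by rewrite -[X in (_ <= X)%N]card_ord max_card. Qed.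

Lemma sum_rank_share :
  \sum_(i | (m i < k)%N) rank_share R m i = \sum_(top_count.+1 <= j < I.+1) (j%:R)^-1.
Proof.
rewrite sum_rank_share_positions (_ : iota 1 I = index_iota 1 I.+1); last first.
  by rewrite /index_iota subn1.
rewrite [LHS](big_cat_nat _ (n := top_count.+1)) ?ltnS ?top_count_le //=.
rewrite [X in X + _]big1_seq ?add0r => [|j]; last first.
  rewrite mem_index_iota => /andP[lt_sk /andP[pos_j le_jn]].
  have lt_j1n : (j.-1 < top_count)%N by rewrite -ltnS prednK.
  move: lt_sk; rewrite nth_desc_msgs_lt ?(leq_trans lt_j1n top_count_le) //.
  by rewrite leqNgt lt_j1n.
rewrite big_nat_cond [RHS]big_nat_cond; apply: eq_bigl => j.
case/boolP: (_ <= j < _)%N => //= /andP[lt_nj le_jI].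
have pos_j : (0 < j)%N by rewrite (leq_ltn_trans _ lt_nj).
by rewrite nth_desc_msgs_lt; rewrite -ltnS prednK.
Qed.

Lemma card_top : #|[pred i | ~~ (m i < k)%N]| = top_count.
Proof. by apply: eq_card => i; rewrite !inE ltn_neqAle -ltnS ltn_ord andbT negbK. Qed.

Lemma card_below : #|[pred i | (m i < k)%N]| = (I - top_count)%N.
Proof.
have cardI : (#|[pred i | (m i < k)%N]| + top_count)%N = I.
  by rewrite -card_top -[RHS]card_ord; exact: cardC.
by apply/eqP; rewrite -(eqn_add2r top_count) subnK ?top_count_le // cardI.
Qed.

Lemma sum_top_const (c : R) : \sum_(i | ~~ (m i < k)%N) c = c *+ top_count.
Proof. by rewrite sumr_const; congr (_ *+ _); exact: card_top. Qed.

Lemma sum_below_const (c : R) : \sum_(i | (m i < k)%N) c = c *+ (I - top_count).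
Proof. by rewrite sumr_const; congr (_ *+ _); exact: card_below. Qed.

End RankShares.

Lemma upd_id (I k : nat) (m : profile I k) i : upd m i (m i) = m.
Proof. by apply/ffunP => j; rewrite ffunE; case: eqP => // ->. Qed.

Lemma upd_upd (I k : nat) (m : profile I k) i x y : upd (upd m i x) i y = upd m i y.
Proof. by apply/ffunP => j; rewrite !ffunE; case: eqP. Qed.

Lemma upd_eq (I k : nat) (m : profile I k) i x : upd m i x i = x.
Proof. by rewrite ffunE eqxx. Qed.

Section ExponentialPriceMechanism.

Variables (R : realFieldType) (I k : nat) (a X : R).

Definition raise (m : profile I k) (i : 'I_I) : profile I k := upd m i (inord (m i).+1).

Lemma raise_eq (m : profile I k) i : (m i < k)%N -> raise m i i = (m i).+1 :> nat.
Proof. by move=> lt_mk; rewrite upd_eq inordK. Qed.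

Lemma exp_q_raise (m : profile I k) i : (m i < k)%N ->
  exp_q R i (raise m i) = exp_q R i m + k%:R^-1 * rank_share R m i.
Proof.
move=> lt_mk; rewrite /exp_q raise_eq //.
under eq_bigr => t _ do rewrite upd_upd.
rewrite (bigD1 (m i)) //= upd_id addrC; congr (_ + _).
by apply: eq_bigl => t; rewrite ltnS ltn_neqAle andbC.
Qed.

Lemma exp_P_raise (m : profile I k) i : (m i < k)%N ->
  exp_P a X i (raise m i) = exp_P a X i m + (exp_P a X i m + X) / a.
Proof. by move=> lt_mk; rewrite /exp_P raise_eq // exprS; ring. Qed.

Local Notation q := (@exp_q R I k).
Local Notation P := (@exp_P R I k a X).

Lemma util_raise_gap (N : nat) (t : 'I_N.+1) (m : profile I k) i : (m i < k)%N ->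
  util q P i t m - util q P i t (raise m i)
  = (P i m + X) / a - vgrid R t * (k%:R^-1 * rank_share R m i).
Proof. by move=> lt_mk; rewrite /util exp_q_raise // exp_P_raise //; ring. Qed.

Lemma raise_incentive (N : nat) (p : 'I_N.+1 -> R) mu i : is_BCE p q P mu ->
  0 <= \sum_t \sum_(m : profile I k | (m i < k)%N)
         mu t m * (util q P i t m - util q P i t (raise m i)).
Proof.
case=> _ _ ic.
under eq_bigr => t _ do
  rewrite (partition_big (fun m : profile I k => m i) (fun x : 'I_k.+1 => (x < k)%N)) //.
rewrite exchange_big /=; apply: sumr_ge0 => x lt_xk.
apply: le_trans (ic i x (inord x.+1)) _; rewrite le_eqVlt; apply/predU1P; left.
apply: eq_bigr => t _; apply: eq_big => [m | m /eqP def_x].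
  by case: eqP => [-> | _]; rewrite ?andbF ?andbT.
by rewrite /raise def_x.
Qed.

Lemma sum_exp_P_decomposition (N : nat) (t : 'I_N.+1) (m : profile I k) : a != 0 ->
  \sum_i P i m = bound_term I k a X (vgrid R t) (top_count m)
                 + a * \sum_(i | (m i < k)%N) (util q P i t m - util q P i t (raise m i)).
Proof.
move=> a_neq0.
have gap_sum : \sum_(i | (m i < k)%N) (util q P i t m - util q P i t (raise m i))
    = (\sum_(i | (m i < k)%N) P i m + X *+ (I - top_count m)) / a
      - vgrid R t * (k%:R^-1 * \sum_((top_count m).+1 <= j < I.+1) (j%:R)^-1).
  rewrite (eq_bigr _ (fun i => @util_raise_gap _ t m i)) big_split /= sumrN.
  by rewrite -mulr_suml -2![in LHS]mulr_sumr sum_rank_share big_split /= sum_below_const.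
have top_sum : \sum_(i | ~~ (m i < k)%N) P i m = X * ((1 + a^-1) ^+ k - 1) *+ top_count m.
  rewrite -sum_top_const; apply: eq_bigr => i; rewrite -leqNgt => le_km.
  rewrite /exp_P; suff -> : m i = k :> nat by [].
  by apply/eqP; rewrite eqn_leq le_km -ltnS ltn_ord.
rewrite gap_sum (bigID (fun i => (m i < k)%N)) /= top_sum addrC.
rewrite /bound_term -[X *+ _]mulr_natr -[_ *+ top_count m]mulr_natr !natrB ?top_count_le //.
rewrite [a * (_ - _)]mulrBr [a * (_ / a)]mulrC divfK //; ring.
Qed.

Lemma exp_mechanism_guarantees (N : nat) (p : 'I_N.+1 -> R) :
  0 < a -> guarantees p q P (rev_bound I k a X p).
Proof.
move=> a_gt0 mu mu_BCE; have [mu_ge0 mu_marginal _] := mu_BCE.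
pose gap (t : 'I_N.+1) m i := util q P i t m - util q P i t (raise m i).
have -> : \sum_t \sum_(m : profile I k) mu t m * \sum_i P i m
    = \sum_t \sum_(m : profile I k) mu t m * bound_term I k a X (vgrid R t) (top_count m)
      + a * \sum_i \sum_t \sum_(m : profile I k | (m i < k)%N) mu t m * gap t m i.
  under eq_bigr => t _ do under eq_bigr => m _ do
    rewrite (sum_exp_P_decomposition t m (lt0r_neq0 a_gt0)) mulrDr.
  under eq_bigr => t _ do rewrite big_split.
  rewrite big_split /=; congr (_ + _).
  under eq_bigr => t _ do under eq_bigr => m _ do rewrite mulrCA mulr_sumr.
  under eq_bigr => t _ do rewrite -mulr_sumr.
  rewrite -mulr_sumr [in RHS]exchange_big; congr (_ * _); apply: eq_bigr => t _.
  by rewrite (exchange_big_dep xpredT).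
rewrite -[rev_bound _ _ _ _ _]addr0; apply: lerD.
  apply: ler_sum => t _; rewrite -mu_marginal mulr_suml; apply: ler_sum => m _.
  apply: ler_wpM2l; first exact: mu_ge0.
  have lt_top : (top_count m < I.+1)%N by exact: top_count_le.
  exact: (bigmin_le _ (Ordinal lt_top) (fun n : 'I_I.+1 => bound_term I k a X (vgrid R t) n)).
apply: mulr_ge0; first exact: ltW.
by apply: sumr_ge0 => i _; exact: raise_incentive mu_BCE.
Qed.

End ExponentialPriceMechanism.

Theorem proposition1 (R : realFieldType) (N I : nat) (p : 'I_N.+1 -> R) :
  (0 < N)%N -> (0 < I)%N -> @is_prior R N p ->
  (forall (k : nat) (a X : R), (0 < k)%N -> 0 < a -> 0 < X ->
     @guarantees R N I k p (@exp_q R I k) (@exp_P R I k a X)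
                 (@rev_bound R N I k a X p))
  /\
  (forall Rv : R,
     (exists (k : nat) (a X : R),
        [/\ (0 < k)%N, 0 < a, 0 < X & Rv < @rev_bound R N I k a X p]) ->
     exists (k : nat) (a X : R),
        [/\ (0 < k)%N, 0 < a, 0 < X &
            @guarantees R N I k p (@exp_q R I k) (@exp_P R I k a X) Rv]).
Proof.
move=> _ _ _; split=> [k a X _ a_gt0 _ | Rv [k [a [X [k_gt0 a_gt0 X_gt0 lt_Rv]]]]].
  exact: exp_mechanism_guarantees.
exists k, a, X; split=> //.
exact: guarantees_le (ltW lt_Rv) (@exp_mechanism_guarantees R I k a X N p a_gt0).
Qed.
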